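(* Let $R$ be a finite group and let $\varphi$ be a non-identity automorphism of $R$. Then one of the following holds: (1) the number of inverse-closed subsets $S\subseteq R$ with $S^\varphi=S$ is at most $2^{\mathbf{c}(R)-|R|/96}$; (2) $A:=C_R(\varphi)$ is abelian of exponent greater than $2$ and has index $2$ in $R$, there is $x\in R\setminus A$ with $x^2$ an involution of $A$ and $xax^{-1}=a^{-1}$ for all $a\in A$ (so $R$ is generalized dicyclic over $A$), and $\varphi=\bar\iota_A$; (3) $R$ is abelian of exponent greater than $2$ and $\varphi=\iota$.
   Context: $\mathbf{I}(R)=\{x\in R\mid x^2=1\}$, $\mathbf{c}(R)=(|R|+|\mathbf{I}(R)|)/2$. A subset $S$ is inverse-closed if $S^{-1}=S$. $C_R(\varphi)=\{x\in R\mid x^\varphi=x\}$. $\iota:R\to R$ is $x\mapsto x^{-1}$. Generalized dicyclic: for $A$ abelian of even order and exponent $>2$ and $y$ an involution of $A$, $\mathrm{Dic}(A,y,x)=\langle A,x\mid x^2=y,\ x^{-1}ax=a^{-1}\ \forall a\in A\rangle$; $\bar\iota_A$ is the automorphism with $a^{\bar\iota_A}=a$ and $(ax)^{\bar\iota_A}=ax^{-1}$ for all $a\in A$. *)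

From HB Require Import structures.
From mathcomp Require Import all_boot all_fingroup all_solvable.
Set Implicit Arguments. Unset Strict Implicit. Unset Printing Implicit Defensive.
Local Open Scope group_scope.

Definition invsq (gT : finGroupType) (R : {set gT}) : {set gT} :=
  [set x in R | x ^+ 2 == 1].

(* c(R) = (|R| + |I(R)|)/2  (the numerator is always even) *)
Definition cR (gT : finGroupType) (R : {set gT}) : nat :=
  ((#|R| + #|invsq R|) %/ 2)%N.

Definition inv_phi_sets (gT : finGroupType) (R : {set gT}) (phi : {perm gT})
  : {set {set gT}} :=
  [set S : {set gT} | [&& S \subset R, S^-1 == S & phi @: S == S]].

Definition fixR (gT : finGroupType) (R : {set gT}) (phi : {perm gT}) : {set gT} :=
  [set x in R | phi x == x].

From HB Require Import structures.
From mathcomp Require Import all_boot all_fingroup all_solvable.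
From mathcomp Require Import zify.
Set Implicit Arguments. Unset Strict Implicit. Unset Printing Implicit Defensive.
Local Open Scope group_scope.

(* Let M be the set of points of R that phi sends neither to themselves nor to
   their inverses.  The group generated by phi and inversion acts on R, every
   inverse-closed phi-invariant subset is a union of its orbits, and every orbit O
   satisfies 4 + |O :&: M| <= 2 (|O| + |O :&: I(R)|).  Summing over the orbits bounds
   the number of such subsets by 2^(c(R) - |M|/4), which is (1) once 24 |M| >= |R|.
   Otherwise let F = C_R(phi).  A multiplicative map inverting more than three
   quarters of a group inverts all of it, and the group is then abelian.  Applied to
   conjugations of F, this shows that a coset F t outside F is either inverted
   pointwise by phi or meets M in at least |F|/4 points, so fewer than |R|/6 elements
   lie in cosets of the second kind.  If F has an element f of order greater than 2,
   the product of two elements of inverted cosets is not in an inverted coset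
   (conjugation by it fixes f instead of inverting it); counting then forces
   |R : F| = 2, which yields (2).  If F has exponent at most 2, phi inverts more than
   three quarters of R, which yields (3). *)

Lemma card_partitionI (T : finType) (P : {set {set T}}) (D X : {set T}) :
  partition P D -> #|D :&: X| = (\sum_(A in P) #|A :&: X|)%N.
Proof.
move=> partP; rewrite -sum1_card (eq_bigl [pred x in D | x \in X]) => [|x].
  rewrite (set_partition_big_cond _ partP); apply: eq_bigr => A _.
  by rewrite -sum1_card; apply: eq_bigl => x; rewrite inE.
by rewrite !inE.
Qed.

Lemma subgroup_gt_half_eq (gT : finGroupType) (G H : {group gT}) :
  H \subset G -> (#|G| < 2 * #|H|)%N -> H :=: G.
Proof.
move=> sHG ltG; apply: index1g => //; move: ltG.
rewrite -(Lagrange sHG) mulnC ltn_pmul2r ?cardG_gt0 //.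
by have := indexg_gt0 G H; case: #|G : H| => [|[|]].
Qed.

Section ThreeQuarters.

Variables (gT : finGroupType) (G : {group gT}) (al : gT -> gT).
Hypothesis alM : {in G &, {morph al : x y / x * y}}.
Let I := [set g in G | al g == g^-1].
Hypothesis I_large : (3 * #|G| < 4 * #|I|)%N.

Let sIG : I \subset G. Proof. by rewrite /I setIdE subsetIl. Qed.

Lemma inverted_centG x : x \in I -> G \subset 'C[x].
Proof.
move=> Ix; have Gx := subsetP sIG x Ix.
have sIxC : I :&: x^-1 *: I \subset 'C_G[x].
  apply/subsetP=> z /setIP[Iz]; rewrite mem_lcoset invgK in_setI cent1E => Ixz.
  move: Ix Iz Ixz; rewrite !inE => /andP[_ /eqP alx] /andP[Gz /eqP alz].
  case/andP=> _; rewrite alM // alx alz -invMg (inj_eq invg_inj) => zx.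
  by rewrite Gz.
have sIUG : I :|: x^-1 *: I \subset G.
  rewrite subUset sIG; apply/subsetP=> z; rewrite mem_lcoset invgK => Ixz.
  by rewrite -(groupMl _ Gx) (subsetP sIG).
have cardxI : #|x^-1 *: I| = #|I| := card_lcoset I x^-1.
have cardUI := cardsUI I (x^-1 *: I).
have leUG := subset_leq_card sIUG.
have eqC : 'C_G[x] :=: G.
  apply: subgroup_gt_half_eq; first exact: subsetIl.
  have ltGI : (#|G| < 2 * #|I :&: x^-1 *: I|)%N by lia.
  by apply: (leq_trans ltGI); rewrite leq_mul2l subset_leq_card ?orbT.
by rewrite -eqC subsetIr.
Qed.

Let al1 : al 1 = 1.
Proof. by apply: (mulIg (al 1)); rewrite -alM ?mulg1 ?mul1g. Qed.

Let group_set_inverted : group_set I.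
Proof.
apply/group_setP; split; first by rewrite inE group1 al1 invg1 /=.
move=> x y Ix Iy; have /subsetP cGx := inverted_centG Ix.
move: Ix Iy; rewrite !inE => /andP[Gx /eqP alx] /andP[Gy /eqP aly].
by rewrite groupM //= alM // alx aly -invMg (cent1P (cGx y Gy)).
Qed.

Lemma inverted_all g : g \in G -> al g = g^-1.
Proof.
have eqIG : Group group_set_inverted :=: G.
  apply: subgroup_gt_half_eq; first exact: sIG.
  change (#|G| < 2 * #|I|)%N; lia.
by rewrite -eqIG inE => /andP[_ /eqP].
Qed.

Lemma inverted_abelian : abelian G.
Proof.
apply/centsP=> x Gx y Gy; apply/cent1P.
have Iy : y \in I by rewrite inE Gy inverted_all /=.
exact: subsetP (inverted_centG Iy) x Gx.
Qed.

End ThreeQuarters.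

Lemma eq_invg_self (gT : finGroupType) (z : gT) : (z^-1 == z) = (z ^+ 2 == 1).
Proof. by rewrite eq_invg_mul expgS expg1. Qed.

Definition invg_perm (gT : finGroupType) : {perm gT} := perm (@invg_inj gT).

Lemma invg_permE (gT : finGroupType) (x : gT) : invg_perm gT x = x^-1.
Proof. exact: permE. Qed.

Lemma double_cR (gT : finGroupType) (R : {group gT}) :
  (2 * cR R = #|R| + #|invsq R|)%N.
Proof.
pose iota := invg_perm gT.
have iota_2group : 2.-group <[iota]>.
  apply: pnat_dvd (pnat_id (isT : prime 2)).
  by rewrite order_dvdn expgS expg1; apply/eqP/permP=> x; rewrite permM perm1 !invg_permE invgK.
have iota_actsR : [acts <[iota]>, on R | 'P].
  by rewrite cycle_subG; apply/astabsP=> x; rewrite /= apermE invg_permE groupV.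
have fix_iota : 'Fix_(R | 'P)(<[iota]>) = invsq R.
  apply/setP=> x; rewrite /invsq afix_cycle in_setI [in RHS]inE -eq_invg_self.
  by congr (_ && _); apply/afix1P/eqP; rewrite /= apermE invg_permE.
have := pgroup_fix_mod iota_2group iota_actsR; rewrite fix_iota => modRI.
by rewrite /cR mulnC divnK // /dvdn -modnDml modRI modnDml addnn -mul2n modnMr.
Qed.

Lemma exponent_gt2 (gT : finGroupType) (G : {group gT}) x :
  x \in G -> x ^+ 2 != 1 -> (2 < exponent G)%N.
Proof.
move=> Gx; apply: contraNT; rewrite -leqNgt -order_dvdn => le_exp2.
apply: dvdn_trans (dvdn_exponent Gx) _.
by move: le_exp2 (exponent_gt0 G); case: (exponent G) => [|[|[|]]].
Qed.

Definition gen_dicyclic_bar_iota (gT : finGroupType) (R : {set gT}) (phi : {perm gT})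
  : Prop :=
  let A := fixR R phi in
  [/\ abelian A, (2 < exponent A)%N, #|R : A| = 2%N &
    exists2 x, x \in R :\: A &
      [/\ x ^+ 2 \in A, #[x ^+ 2] = 2%N,
          (forall a, a \in A -> x * a * x^-1 = a^-1) &
          (forall a, a \in A -> phi a = a /\ phi (a * x) = a * x^-1)]].

Definition abelian_inversion (gT : finGroupType) (R : {set gT}) (phi : {perm gT})
  : Prop :=
  [/\ abelian R, (2 < exponent R)%N & forall x, x \in R -> phi x = x^-1].

Definition invertR (gT : finGroupType) (R : {set gT}) (phi : {perm gT}) : {set gT} :=
  [set x in R | phi x == x^-1].

Definition movedR (gT : finGroupType) (R : {set gT}) (phi : {perm gT}) : {set gT} :=
  [set x in R | (phi x != x) && (phi x != x^-1)].

Section Automorphism.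

Variables (gT : finGroupType) (R : {group gT}) (phi : {perm gT}).
Hypothesis autR_phi : phi \in Aut R.

Let phiM : {in R &, {morph phi : x y / x * y}}.
Proof. exact/morphicP/Aut_morphic. Qed.

Let phi1 : phi 1 = 1. Proof. exact: morph1 (autm autR_phi). Qed.

Let phiX n : {in R, {morph phi : x / x ^+ n}}.
Proof. exact: morphX (autm autR_phi) n. Qed.

Let phiR x : (phi x \in R) = (x \in R).
Proof. by case/setIdP: autR_phi => /perm_closed. Qed.

Lemma card_moved_closed_set (O : {set gT}) :
    O \subset R -> O != set0 ->
    (forall y, y \in O -> phi y \in O) -> (forall y, y \in O -> y^-1 \in O) ->
  (4 + #|O :&: movedR R phi| <= 2 * (#|O| + #|O :&: invsq R|))%N.
Proof.
move=> /subsetP sOR /set0Pn[x Ox] phiO invO.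
set a := #|_ :&: movedR R phi|; set o := #|O|; set i := #|_ :&: invsq R|.
have OI z : z \in O -> z ^+ 2 = 1 -> z \in O :&: invsq R.
  by move=> Oz z2; rewrite !inE Oz sOR //= z2 eqxx.
have le_ao : (a <= o)%N by rewrite subset_leq_card ?subsetIl.
case: (set_0Vmem (O :&: movedR R phi)) => [OM0 | [y /setIP[Oy]]].
  have -> : a = 0%N by rewrite /a OM0 cards0.
  case: (eqVneq (x ^+ 2) 1) => [x2 | x2].
    have : (0 < i)%N by apply/card_gt0P; exists x; apply: OI.
    have : (0 < o)%N by apply/card_gt0P; exists x.
    lia.
  have : (2 <= o)%N.
    apply: leq_trans (subset_leq_card (_ : [set x; x^-1] \subset O)).
      by rewrite cards2 eq_sym eq_invg_self x2.
    by rewrite subUset !sub1set Ox invO.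
  lia.
rewrite inE sOR //= => /andP[phiy_y phiy_yV].
have Ophiy := phiO y Oy.
case: (eqVneq (y ^+ 2) 1) => [y2 | y2].
  have phiy2 : phi y ^+ 2 = 1 by rewrite -phiX ?sOR // y2 phi1.
  have : (2 <= i)%N.
    apply: leq_trans (subset_leq_card (_ : [set y; phi y] \subset O :&: invsq R)).
      by rewrite cards2 eq_sym phiy_y.
    by rewrite subUset !sub1set !OI.
  lia.
have phiy2 : phi y ^+ 2 != 1 by rewrite -phiX ?sOR // -phi1 (inj_eq perm_inj).
have : (4 <= o)%N.
  apply: leq_trans (subset_leq_card (_ : y |: (y^-1 |: (phi y |: [set (phi y)^-1])) \subset O)).
    rewrite !cardsU1 cards1 !inE (inj_eq invg_inj) ![_ == phi y]eq_sym.
    rewrite ![_ == _^-1]eq_sym !eq_invg_self eq_invg_sym [y^-1 == _]eq_sym.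
    by rewrite (negbTE y2) (negbTE phiy2) (negbTE phiy_y) (negbTE phiy_yV).
  by rewrite !subUset !sub1set Oy Ophiy !invO.
lia.
Qed.

Let iota := invg_perm gT.
Let H := <<[set phi; iota]>>.
Let orbits := orbit 'P H @: R.

Let H_acts (S : {set gT}) :
    (forall x, (phi x \in S) = (x \in S)) -> (forall x, (x^-1 \in S) = (x \in S)) ->
  [acts H, on S | 'P].
Proof.
move=> phiS invS; rewrite gen_subG subUset !sub1set.
by apply/andP; split; apply/astabsP=> x; rewrite /= apermE ?invg_permE.
Qed.

Let partition_orbits : partition orbits R.
Proof. exact/orbit_partition/H_acts/groupV. Qed.

Let card_inv_phi_sets_orbits : (#|inv_phi_sets R phi| <= 2 ^ #|orbits|)%N.
Proof.
pose orbits_in (S : {set gT}) := [set O in orbits | O \subset S].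
have H_actsS S : S \in inv_phi_sets R phi -> [acts H, on S | 'P].
  rewrite inE => /and3P[_ /eqP SV /eqP phiS]; apply: H_acts => x.
    by rewrite -{1}phiS mem_imset //; apply: perm_inj.
  by rewrite -{1}SV mem_invg invgK.
suff inj_orbits_in : {in inv_phi_sets R phi &, injective orbits_in}.
  rewrite -(card_in_imset inj_orbits_in) -card_powerset subset_leq_card //.
  by apply/subsetP=> _ /imsetP[S _ ->]; rewrite powersetE /orbits_in setIdE subsetIl.
suff sub_orbits_in S1 S2 : S1 \in inv_phi_sets R phi -> orbits_in S1 = orbits_in S2 ->
    S1 \subset S2.
  by move=> S1 S2 S1s S2s eqS; apply/eqP; rewrite eqEsubset !sub_orbits_in.
move=> S1s eqS; apply/subsetP=> x S1x.
have Rx : x \in R by move: S1s; rewrite inE => /and3P[/subsetP->].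
have : orbit 'P H x \in orbits_in S2.
  by rewrite -eqS inE imset_f //= (acts_sub_orbit _ (H_actsS _ S1s)).
by rewrite inE => /andP[_ /subsetP]; apply; apply: orbit_refl.
Qed.

Let card_moved_orbits :
  (4 * #|orbits| + #|movedR R phi| <= 2 * (#|R| + #|invsq R|))%N.
Proof.
have : (\sum_(O in orbits) (4 + #|O :&: movedR R phi|)
         <= \sum_(O in orbits) 2 * (#|O| + #|O :&: invsq R|))%N.
  apply: leq_sum => _ /imsetP[x Rx ->]; apply: card_moved_closed_set.
  - by rewrite (acts_sub_orbit _ (H_acts phiR (@groupV _ R))).
  - by apply/set0Pn; exists x; apply: orbit_refl.
  - by move=> y; rewrite -[phi y]/(aperm y phi) orbit_actr // mem_gen ?setU11.
  - move=> y; rewrite -(invg_permE y) -[iota y]/(aperm y iota).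
    by rewrite orbit_actr // mem_gen ?setU1r ?set11.
rewrite big_split sum_nat_const -big_distrr big_split /= -(card_partition partition_orbits).
have sIR : invsq R \subset R by rewrite /invsq setIdE subsetIl.
have sMR : movedR R phi \subset R by rewrite /movedR setIdE subsetIl.
by rewrite -!(card_partitionI _ partition_orbits) (setIidPr sIR) (setIidPr sMR) mulnC.
Qed.

Lemma card_inv_phi_sets_moved :
  (#|inv_phi_sets R phi| ^ 4 <= 2 ^ (4 * cR R - #|movedR R phi|))%N.
Proof.
apply: leq_trans (_ : (2 ^ #|orbits|) ^ 4 <= _)%N.
  by rewrite leq_exp2r // card_inv_phi_sets_orbits.
rewrite -expnM leq_pexp2l //; have := double_cR R; have := card_moved_orbits; lia.
Qed.

Lemma group_set_fixR : group_set (fixR R phi).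
Proof.
apply/group_setP; split=> [|x y]; first by rewrite inE group1 phi1 /=.
by rewrite !inE => /andP[Rx /eqP phix] /andP[Ry /eqP phiy]; rewrite groupM // phiM // phix phiy /=.
Qed.

Canonical fixR_group := Group group_set_fixR.

Let F := fixR R phi.
Let T := invertR R phi.
Let M := movedR R phi.

Let sFR : F \subset R. Proof. by rewrite /F /fixR setIdE subsetIl. Qed.

Let phiF a : a \in F -> phi a = a. Proof. by rewrite inE => /andP[_ /eqP]. Qed.

Let phiT t : t \in T -> phi t = t^-1. Proof. by rewrite inE => /andP[_ /eqP]. Qed.

Lemma invertR_mulr f t : f \in F -> t \in T -> (f * t \in T) = (f ^ t^-1 == f^-1).
Proof.
rewrite !inE => /andP[Rf /eqP phif] /andP[Rt /eqP phit].
by rewrite groupM //= phiM // phif phit conjgE invgK invMg -(inj_eq (mulgI t)) mulKVg.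
Qed.

Lemma rcoset_subD_fixR x : x \in R :\: F -> F :* x \subset R :\: F.
Proof.
case/setDP=> Rx Fx; apply/subsetP=> y /rcosetP[f Ff ->].
by rewrite in_setD (groupMl _ Ff) Fx (groupMl _ (subsetP sFR f Ff)).
Qed.

Let goodR := [set x in R :\: F | F :* x \subset T].
Let badR := (R :\: F) :\: goodR.

Let sGRF : goodR \subset R :\: F. Proof. by rewrite /goodR setIdE subsetIl. Qed.

Let sBR : badR \subset R. Proof. exact: subset_trans (subsetDl _ _) (subsetDl _ _). Qed.

Lemma goodR_invertR x : x \in goodR -> x \in T.
Proof. by case/setIdP=> _ /subsetP; apply; apply: rcoset_refl. Qed.

Lemma conj_fixR_goodR x f : x \in goodR -> f \in F -> f ^ x^-1 = f^-1.
Proof.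
move=> Gx Ff; apply/eqP; rewrite -(invertR_mulr Ff (goodR_invertR Gx)).
by case/setIdP: Gx => _ /subsetP; apply; rewrite mem_rcoset mulgK.
Qed.

Lemma rcoset_badR b : b \in badR -> F :* b \subset badR.
Proof.
case/setDP=> RFb Gb; apply/subsetP=> y Fby.
have RFy := subsetP (rcoset_subD_fixR RFb) y Fby.
have /rcoset_eqP eqFy := Fby.
rewrite in_setD RFy andbT; apply: contra _ Gb.
by rewrite [y \in _]inE [b \in _]inE RFb RFy eqFy.
Qed.

Lemma card_bad_coset_noninverted b : b \in badR -> (#|F| <= 4 * #|F :* b :\: T|)%N.
Proof.
case/setDP=> RFb; rewrite inE RFb andTb => FbT.
case: (set_0Vmem (F :* b :&: T)) => [FbT0 | [t /setIP[Fbt Tt]]].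
  have -> : F :* b :\: T = F :* b by apply/setDidPl; rewrite -setI_eq0 FbT0.
  have -> : #|F :* b| = #|F| := card_rcoset F b.
  by rewrite leq_pmull.
have eqFbt : F :* b = F :* t by apply/esym/rcoset_eqP.
pose J := [set f in F | f ^ t^-1 == f^-1].
have J_small : (4 * #|J| <= 3 * #|F|)%N.
  rewrite leqNgt; apply: contraNN FbT => J_large.
  rewrite eqFbt; apply/subsetP=> _ /rcosetP[f Ff ->]; rewrite invertR_mulr //.
  apply/eqP; apply: (@inverted_all _ [group of F] (conjg^~ t^-1)) => // x y _ _; exact: conjMg.
have sFJt : (fun f => f * t) @: (F :\: J) \subset F :* b :\: T.
  apply/subsetP=> _ /imsetP[f /setDP[Ff Jf] ->].
  by rewrite in_setD eqFbt mem_rcoset mulgK Ff invertR_mulr // andbT; rewrite inE Ff in Jf.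
have : #|(fun f => f * t) @: (F :\: J)| = (#|F| - #|J|)%N.
  by rewrite card_imset; [rewrite cardsD (setIidPr _) // /J setIdE subsetIl | exact: mulIg].
have := subset_leq_card sFJt; lia.
Qed.

Lemma card_bad_coset_moved b : b \in badR -> (#|F| <= 4 * #|F :* b :&: M|)%N.
Proof.
move=> Bb; apply: leq_trans (card_bad_coset_noninverted Bb) _.
rewrite leq_mul2l subset_leq_card ?orbT //.
have /subsetP sFbRF := rcoset_subD_fixR (subsetP (subsetDl _ _) b Bb).
apply/subsetP=> y /setDP[Fby Ty]; have /setDP[Ry Fy] := sFbRF y Fby.
by move: Fy Ty; rewrite !inE Fby Ry !andTb => -> ->.
Qed.

Lemma card_rcoset_badR_moved X : X \in rcosets F R -> (#|X :&: badR| <= 4 * #|X :&: M|)%N.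
Proof.
case/rcosetsP=> x _ ->; case: (set_0Vmem (F :* x :&: badR)) => [-> | [b /setIP[Fxb Bb]]].
  by rewrite cards0.
have <- : F :* b = F :* x by apply/rcoset_eqP.
by rewrite (setIidPl (rcoset_badR Bb)) card_rcoset card_bad_coset_moved.
Qed.

Lemma card_badR : (#|badR| <= 4 * #|M|)%N.
Proof.
have partRF := rcosets_partition sFR.
have sMR : M \subset R by rewrite /M /movedR setIdE subsetIl.
rewrite -(setIidPr sBR) -(setIidPr sMR) !(card_partitionI _ partRF) big_distrr.
by apply: leq_sum => X; apply: card_rcoset_badR_moved.
Qed.

Lemma card_fixR_goodR_badR : (#|F| + #|goodR| + #|badR| = #|R|)%N.
Proof.
have := cardsID goodR (R :\: F); have := cardsID F R.
by rewrite (setIidPr sGRF) (setIidPr sFR) -/badR -addnA => <- <-.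
Qed.

Section FewMoved.

Hypotheses (phi_neq1 : phi != 1) (few_moved : (24 * #|M| < #|R|)%N).

Let phi_moves : exists2 z, z \in R & phi z != z.
Proof.
apply/exists_inP; apply: contraR phi_neq1 => /exists_inPn phi_fixed.
apply/eqP/(eq_Aut autR_phi (group1 _)) => z Rz; rewrite perm1.
by apply/eqP; rewrite -[_ == _]negbK phi_fixed.
Qed.

Lemma fixR_half : (2 * #|F| <= #|R|)%N.
Proof.
have [z Rz phiz] := phi_moves; rewrite leqNgt; apply/negP => /(subgroup_gt_half_eq sFR) eqFR.
by move: Rz phiz; rewrite -eqFR inE => /andP[_ ->].
Qed.

Let card_badR_small : (6 * #|badR| < #|R|)%N.
Proof. by have := card_badR; lia. Qed.

Section FixedNonInvolution.

Variable f0 : gT.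
Hypotheses (Ff0 : f0 \in F) (f0_2 : f0 ^+ 2 != 1).

Lemma goodR_mul_notin g x : g \in goodR -> x \in goodR -> g * x \notin goodR.
Proof.
move=> Gg Gx; apply/negP => /conj_fixR_goodR/(_ Ff0).
rewrite invMg conjgM (conj_fixR_goodR Gx Ff0) conjVg (conj_fixR_goodR Gg Ff0) invgK.
by move/esym/eqP; rewrite eq_invg_self (negbTE f0_2).
Qed.

Lemma card_goodR_half : (2 * #|goodR| <= #|R|)%N.
Proof.
case: (set_0Vmem goodR) => [-> | [x Gx]]; first by rewrite cards0.
have sGR : goodR \subset R := subset_trans sGRF (subsetDl R F).
have : (fun g => g * x) @: goodR \subset R :\: goodR.
  apply/subsetP=> _ /imsetP[g Gg ->].
  by rewrite in_setD goodR_mul_notin // groupM // (subsetP sGR).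
move/subset_leq_card; rewrite card_imset; last exact: mulIg.
by rewrite cardsD (setIidPr sGR); lia.
Qed.

Lemma badR_eq0 : badR = set0.
Proof.
case: (set_0Vmem badR) => [// | [b Bb]]; exfalso.
have := subset_leq_card (rcoset_badR Bb); rewrite card_rcoset.
have := card_goodR_half; have := card_fixR_goodR_badR; have := fixR_half; lia.
Qed.

Lemma card_R_fixR : #|R| = (2 * #|F|)%N.
Proof.
have := card_goodR_half; have := card_fixR_goodR_badR; have := fixR_half.
rewrite badR_eq0 cards0; lia.
Qed.

Lemma goodR_rcoset x : x \in goodR -> R :\: F = F :* x.
Proof.
move=> Gx; apply/eqP; rewrite eq_sym eqEcard rcoset_subD_fixR ?(subsetP sGRF) // card_rcoset.
rewrite cardsD (setIidPr sFR).
by rewrite card_R_fixR mul2n -addnn addnK andTb.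
Qed.

Lemma goodR_neq0 : goodR != set0.
Proof.
rewrite -card_gt0; have := card_fixR_goodR_badR; rewrite badR_eq0 cards0 card_R_fixR.
have : (0 < #|F|)%N by apply: cardG_gt0.
lia.
Qed.

Lemma expg2_goodR_fixR x : x \in goodR -> x ^+ 2 \in F.
Proof.
move=> Gx; have /setDP[Rx Fx] := subsetP sGRF x Gx.
apply: contraT => Fx2; have : x ^+ 2 \in F :* x by rewrite -(goodR_rcoset Gx) in_setD Fx2 groupX.
by rewrite mem_rcoset expgS expg1 mulgK (negbTE Fx).
Qed.

Lemma order_expg2_goodR x : x \in goodR -> #[x ^+ 2] = 2%N.
Proof.
move=> Gx; have /setDP[Rx _] := subsetP sGRF x Gx.
have Fx2 := expg2_goodR_fixR Gx; have phix := phiT (goodR_invertR Gx).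
have x2_2 : (x ^+ 2) ^+ 2 = 1.
  by apply/eqP; rewrite -eq_invg_self -{2}(phiF Fx2) phiX // phix expgVn.
have x2_1 : x ^+ 2 != 1.
  apply/eqP => x2_1; have xV : x^-1 = x by apply/eqP; rewrite eq_invg_self x2_1.
  have [z Rz] := phi_moves; apply/negP; rewrite negbK.
  have [Fz | Fz] := boolP (z \in F); first by rewrite phiF.
  have : z \in F :* x by rewrite -(goodR_rcoset Gx) in_setD Fz.
  rewrite mem_rcoset => Fzx; rewrite -{1}(mulgKV x z) phiM ?(subsetP sFR _ Fzx) //.
  by rewrite phiF // phix xV -mulgA -{2}xV mulgV mulg1.
by apply/eqP; rewrite eqn_leq order_gt1 x2_1 andbT dvdn_leq // order_dvdn x2_2.
Qed.

End FixedNonInvolution.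

Lemma gen_dicyclic_case f0 : f0 \in F -> f0 ^+ 2 != 1 -> gen_dicyclic_bar_iota R phi.
Proof.
move=> Ff0 f0_2; have /set0Pn[x Gx] := goodR_neq0 Ff0 f0_2.
have /setDP[Rx Fx] := subsetP sGRF x Gx; have phix := phiT (goodR_invertR Gx).
split.
- apply: (@inverted_abelian _ [group of F] (conjg^~ x^-1)) => [y z _ _ | ]; first exact: conjMg.
  rewrite (_ : [set _ in _ | _] = F) ?ltn_pmul2r ?cardG_gt0 //.
  apply/setP=> a; rewrite inE; case: (boolP (a \in F)) => //= Fa.
  by rewrite (conj_fixR_goodR Gx Fa) eqxx.
- exact: exponent_gt2 Ff0 f0_2.
- apply/eqP; rewrite -(eqn_pmul2l (cardG_gt0 [group of F])) (Lagrange sFR).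
  by rewrite (card_R_fixR Ff0 f0_2) mulnC.
exists x; first exact/setDP.
split=> [||a Fa|a Fa]; first exact: (expg2_goodR_fixR Ff0 f0_2 Gx).
- exact: (order_expg2_goodR Ff0 f0_2 Gx).
- by move/(conj_fixR_goodR Gx): Fa; rewrite conjgE invgK mulgA.
- by split; [apply: phiF | rewrite phiM ?(subsetP sFR a Fa) // phiF // phix].
Qed.

Lemma inversion_case : (forall f, f \in F -> f ^+ 2 = 1) -> abelian_inversion R phi.
Proof.
move=> F_2.
have sRBT : R :\: badR \subset T.
  apply/subsetP=> z /setDP[Rz Bz]; have [Fz | Fz] := boolP (z \in F).
    have z2 := F_2 z Fz; move: Fz; rewrite !inE Rz => /andP[_ /eqP->].
    by rewrite eq_sym eq_invg_self z2 eqxx.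
  by apply: goodR_invertR; apply: contraNT Bz => Gz; rewrite !in_setD Gz Fz Rz.
have T_large : (3 * #|R| < 4 * #|T|)%N.
  have := subset_leq_card sRBT; rewrite cardsD (setIidPr sBR).
  have := card_badR_small; set n := #|R|; set b := #|badR|; set t := #|T|; lia.
have phiV := inverted_all phiM T_large.
split=> //; first exact: inverted_abelian phiM T_large.
have [z Rz phiz] := phi_moves; have phiV_z := phiV z Rz.
by apply: exponent_gt2 Rz _; rewrite -eq_invg_self -phiV_z.
Qed.

End FewMoved.

End Automorphism.

Theorem lemma2p4 (gT : finGroupType) (R : {group gT}) (phi : {perm gT}) :
  phi \in Aut R -> phi != 1 ->
  (#|inv_phi_sets R phi| ^ 96 <= 2 ^ (96 * cR R - #|R|))%N
  \/
  (let A := fixR R phi in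
   [/\ abelian A, (2 < exponent A)%N, #|R : A| = 2%N &
     exists2 x, x \in R :\: A &
       [/\ x ^+ 2 \in A, #[x ^+ 2] = 2%N,
           (forall a, a \in A -> x * a * x^-1 = a^-1) &
           (forall a, a \in A -> phi a = a /\ phi (a * x) = a * x^-1)]])
  \/
  [/\ abelian R, (2 < exponent R)%N & forall x, x \in R -> phi x = x^-1].
Proof.
move=> autR_phi phi_neq1.
have [few_moved | many_moved] := ltnP (24 * #|movedR R phi|) #|R|.
  right; have [f0 /andP[Ff0 f0_2] | F_2] := pickP [pred f | (f \in fixR R phi) && (f ^+ 2 != 1)].
    by left; apply: gen_dicyclic_case Ff0 f0_2.
  right; apply: inversion_case => // f Ff; apply/eqP.
  by move: (F_2 f); rewrite /= Ff => /negbFE.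
left; apply: leq_trans (_ : (2 ^ (4 * cR R - #|movedR R phi|)) ^ 24 <= _)%N.
  by rewrite -[96]/(4 * 24)%N expnM leq_exp2r // card_inv_phi_sets_moved.
by rewrite -expnM leq_pexp2l //; lia.
Qed.
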